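(* Let $i,p\ge-1$ and $q\ge0$, and let $v\in C([0,1],L(\mathbb{R}^d,\mathbb{R}^n))$, $w\in C([0,1],\mathbb{R}^d)$. Then \[ \Big\|\Delta_i\Big(\int_0^\cdot\Delta_pv(s)\,d\Delta_qw(s)\Big)\Big\|_\infty\lesssim 2^{-(i\vee p\vee q)-i+p+q}\|\Delta_pv\|_\infty\|\Delta_qw\|_\infty, \] except in the case $i=q>p$, where one only has \[ \Big\|\Delta_i\Big(\int_0^\cdot\Delta_pv(s)\,d\Delta_qw(s)\Big)\Big\|_\infty\lesssim\|\Delta_pv\|_\infty\|\Delta_qw\|_\infty. \]
   Context: Index set: pairs $(p,m)$ with either $p=-1,m=0$, or $p\in\mathbb{N}=\{0,1,2,\dots\}$ and $0\le m\le 2^p$. For $p\in\mathbb{N}$, $1\le m\le 2^p$ set $t^0_{pm}=(m-1)2^{-p}$, $t^1_{pm}=(2m-1)2^{-p-1}$, $t^2_{pm}=m2^{-p}$. Rescaled Haar functions: for $p\in\mathbb{N}$, $1\le m\le 2^p$, $\chi_{pm}=2^p$ on $[t^0_{pm},t^1_{pm})$, $=-2^p$ on $[t^1_{pm},t^2_{pm})$, $=0$ elsewhere; $\chi_{00}\equiv1$; $\chi_{p0}\equiv0$ for $p\ge1$. Rescaled Schauder functions: $\varphi_{pm}(t)=\int_0^t\chi_{pm}(s)\,ds$ for $p\in\mathbb{N}$, and $\varphi_{-10}\equiv1$. For continuous $f:[0,1]\to E$ ($E$ a finite-dimensional normed space), coefficients: $f_{-10}=f(0)$, $f_{00}=f(1)-f(0)$,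 $f_{p0}=0$ for $p\ge1$, $f_{pm}=2f(t^1_{pm})-f(t^0_{pm})-f(t^2_{pm})$ for $p\in\mathbb{N},m\ge1$. Schauder blocks: $\Delta_pf=\sum_{m=0}^{2^p}f_{pm}\varphi_{pm}$ for $p\ge-1$. Since $\Delta_qw$ is piecewise linear, $\int_0^t\Delta_pv\,d\Delta_qw:=\int_0^t\Delta_pv(s)(\Delta_qw)'(s)\,ds$. $\|\cdot\|_\infty$ is the sup norm on $[0,1]$; $a\vee b=\max(a,b)$; $\lesssim$ hides a constant independent of $i,p,q,v,w$. *)

From Stdlib Require Import Reals Lra Lia ZArith List.
Import ListNotations.
Open Scope R_scope.

Definition fsum (n : nat) (g : nat -> R) : R :=
  fold_right Rplus 0 (map g (seq 0 n)).

Definition vnorm (n : nat) (x : nat -> R) : R :=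
  fold_right Rmax 0 (map (fun k => Rabs (x k)) (seq 0 n)).

(* operator norm of an n x d matrix (entries M k j, k<n, j<d) from
   (R^d, max norm) to (R^n, max norm): max row sum *)
Definition opnorm (n d : nat) (M : nat -> nat -> R) : R :=
  fold_right Rmax 0 (map (fun k => fsum d (fun j => Rabs (M k j))) (seq 0 n)).

(* dyadic points, p >= 0, 1 <= m <= 2^p *)
Definition t0 (p m : nat) : R := (INR m - 1) / 2 ^ p.
Definition t1 (p m : nat) : R := (2 * INR m - 1) / 2 ^ (S p).
Definition t2 (p m : nat) : R := INR m / 2 ^ p.

Definition chi (p m : nat) (s : R) : R :=
  if (m =? 0)%nat then (if (p =? 0)%nat then 1 else 0)
  else if Rle_dec (t0 p m) s then
         (if Rlt_dec s (t1 p m) then 2 ^ p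
          else if Rlt_dec s (t2 p m) then - 2 ^ p else 0)
       else 0.

(* rescaled Schauder functions phi_{pm}(t) = int_0^t chi_{pm}, p >= 0,
   written out explicitly (valid for t in [0,1]) *)
Definition phi (p m : nat) (t : R) : R :=
  if (m =? 0)%nat then (if (p =? 0)%nat then t else 0)
  else if Rle_dec (t0 p m) t then
         (if Rle_dec t (t1 p m) then 2 ^ p * (t - t0 p m)
          else if Rle_dec t (t2 p m) then 2 ^ p * (t2 p m - t) else 0)
       else 0.

Definition scoef (f : R -> R) (p m : nat) : R :=
  if (m =? 0)%nat then (if (p =? 0)%nat then f 1 - f 0 else 0)
  else 2 * f (t1 p m) - f (t0 p m) - f (t2 p m).

Definition DeltaN (f : R -> R) (p : nat) (t : R) : R :=
  sum_f_R0 (fun m => scoef f p m * phi p m t) (2 ^ p)%nat.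

Definition SDelta (f : R -> R) (p : Z) (t : R) : R :=
  if (p <? 0)%Z then f 0 else DeltaN f (Z.to_nat p) t.

(* derivative (a.e., right derivative) of the piecewise linear Delta_q f, q >= 0 *)
Definition dSDelta (f : R -> R) (q : nat) (s : R) : R :=
  sum_f_R0 (fun m => scoef f q m * chi q m s) (2 ^ q)%nat.

Definition cont01 (f : R -> R) : Prop :=
  forall t, 0 <= t <= 1 -> forall eps, eps > 0 ->
    exists delta, delta > 0 /\
      forall s, 0 <= s <= 1 -> Rabs (s - t) < delta -> Rabs (f s - f t) < eps.

From Stdlib Require Import Reals Lra Lia ZArith List Bool.
From Coquelicot Require Import Coquelicot.
Open Scope R_scope.

(* Put L at least one level finer than the grids of Δ_p v and Δ_q w. On each dyadic cell of
   level L, Δ_p v is affine and (Δ_q w)' is constant, so the midpoint rule computes the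
   increment of F = ∫ Δ_p v d(Δ_q w) over the cell exactly; summing increments bounds every
   Schauder coefficient of F of level i < L, hence Δ_i F. Three bounds on increments cover all
   cases. The trivial one (cell length times |Δ_p v| |(Δ_q w)'|) settles p >= i, q and the case
   i = q > p. If q > p, use cells of level q: Δ_q w vanishes at their endpoints, so (Δ_q w)'
   changes sign at the midpoint, and since Δ_p v is affine only its slope survives, with a
   gain 2^(p-q). If i > p, q, the same cancellation happens inside the second difference that
   defines a coefficient of level i, where (Δ_q w)' is now constant. Slopes of Δ_r are bounded
   by 2^(r+1) times its sup norm because Δ_r is affine between grid points of level r+1. *)

Lemma fsum_le (d : nat) (g h : nat -> R) :
  (forall j, (j < d)%nat -> g j <= h j) -> fsum d g <= fsum d h.
Proof.
  intros H; unfold fsum.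
  assert (Hin : forall j, In j (seq 0 d) -> g j <= h j)
    by (intros j Hj; apply in_seq in Hj; apply H; lia).
  induction (seq 0 d) as [|j l IH]; simpl in *; [lra|].
  pose proof (Hin j (or_introl eq_refl)).
  pose proof (IH (fun k Hk => Hin k (or_intror Hk))). lra.
Qed.

Lemma fsum_ext (d : nat) (g h : nat -> R) :
  (forall j, (j < d)%nat -> g j = h j) -> fsum d g = fsum d h.
Proof.
  intros H; apply Rle_antisym; apply fsum_le; intros j Hj; rewrite H by exact Hj; lra.
Qed.

Lemma fsum_plus (d : nat) (g h : nat -> R) :
  fsum d (fun j => g j + h j) = fsum d g + fsum d h.
Proof. unfold fsum; induction (seq 0 d); simpl; lra. Qed.

Lemma fsum_scal (d : nat) (c : R) (g : nat -> R) :
  fsum d (fun j => c * g j) = c * fsum d g.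
Proof. unfold fsum; induction (seq 0 d) as [|j l IH]; simpl; [ring|rewrite IH; ring]. Qed.

Lemma fsum_abs (d : nat) (g : nat -> R) :
  Rabs (fsum d g) <= fsum d (fun j => Rabs (g j)).
Proof.
  unfold fsum; induction (seq 0 d) as [|j l IH]; simpl; [rewrite Rabs_R0; lra|].
  eapply Rle_trans; [apply Rabs_triang|lra].
Qed.

Lemma fsum_mul_abs_le (d : nat) (a c : nat -> R) (K : R) :
  (forall j, (j < d)%nat -> Rabs (c j) <= K) ->
  Rabs (fsum d (fun j => a j * c j)) <= fsum d (fun j => Rabs (a j)) * K.
Proof.
  intros H. eapply Rle_trans; [apply fsum_abs|].
  rewrite Rmult_comm, <- fsum_scal. apply fsum_le. intros j Hj.
  rewrite Rabs_mult, Rmult_comm. apply Rmult_le_compat_r; [apply Rabs_pos|auto].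
Qed.

Lemma fold_max_ge (l : list nat) (g : nat -> R) (x : nat) :
  In x l -> g x <= fold_right Rmax 0 (map g l).
Proof.
  induction l as [|a l IH]; simpl; intros H; [contradiction|].
  destruct H as [<-|H]; [apply Rmax_l|].
  eapply Rle_trans; [apply IH, H|apply Rmax_r].
Qed.

Lemma fold_max_nonneg (l : list nat) (g : nat -> R) : 0 <= fold_right Rmax 0 (map g l).
Proof. induction l; simpl; [lra|]. eapply Rle_trans; [eassumption|apply Rmax_r]. Qed.

Lemma fold_max_le (l : list nat) (g : nat -> R) (M : R) :
  0 <= M -> (forall x, In x l -> g x <= M) -> fold_right Rmax 0 (map g l) <= M.
Proof. induction l; simpl; intros; auto. apply Rmax_lub; auto. Qed.

Lemma opnorm_row (n d : nat) (M : nat -> nat -> R) (k : nat) :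
  (k < n)%nat -> fsum d (fun j => Rabs (M k j)) <= opnorm n d M.
Proof. intros; apply (fold_max_ge _ (fun k => fsum d (fun j => Rabs (M k j)))), in_seq; lia. Qed.

Lemma vnorm_comp (d : nat) (x : nat -> R) (j : nat) : (j < d)%nat -> Rabs (x j) <= vnorm d x.
Proof. intros; apply (fold_max_ge _ (fun k => Rabs (x k))), in_seq; lia. Qed.

Lemma vnorm_le (n : nat) (x : nat -> R) (X : R) :
  0 <= X -> (forall k, (k < n)%nat -> Rabs (x k) <= X) -> vnorm n x <= X.
Proof. intros HX Hx; apply fold_max_le; auto. intros k Hk; apply in_seq in Hk; apply Hx; lia. Qed.

Lemma pow2_pos (n : nat) : 0 < 2 ^ n.
Proof. apply pow_lt; lra. Qed.

Lemma INR_pow2 (n : nat) : INR (2 ^ n) = 2 ^ n.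
Proof. rewrite pow_INR; simpl INR; f_equal; ring. Qed.

Lemma pow2_sub (a b : nat) : (b <= a)%nat -> 2 ^ (a - b) = 2 ^ a / 2 ^ b.
Proof.
  intros. replace a with ((a - b) + b)%nat at 2 by lia.
  rewrite pow_add. pose proof (pow2_pos b). field; lra.
Qed.

Definition dyad (L l : nat) : R := INR l / 2 ^ L.

Lemma dyad_S (L l : nat) : dyad L (S l) = dyad L l + / 2 ^ L.
Proof. unfold dyad; rewrite S_INR; pose proof (pow2_pos L); field; lra. Qed.

Lemma dyad_refine (e L l : nat) : dyad L l = dyad (L + e) (l * 2 ^ e).
Proof.
  unfold dyad; rewrite mult_INR, INR_pow2, pow_add.
  pose proof (pow2_pos L); pose proof (pow2_pos e); field; lra.
Qed.

Lemma dyad_le (L l l' : nat) : (l <= l')%nat -> dyad L l <= dyad L l'.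
Proof.
  intros H; unfold dyad, Rdiv; apply Rmult_le_compat_r.
  - left; apply Rinv_0_lt_compat, pow2_pos.
  - apply le_INR, H.
Qed.

Lemma dyad_0 (L : nat) : dyad L 0 = 0.
Proof. unfold dyad; simpl; pose proof (pow2_pos L); field; lra. Qed.

Lemma dyad_full (L : nat) : dyad L (2 ^ L) = 1.
Proof. unfold dyad; rewrite INR_pow2; pose proof (pow2_pos L); field; lra. Qed.

Lemma dyad_in_01 (L l : nat) : (l <= 2 ^ L)%nat -> 0 <= dyad L l <= 1.
Proof. intros H; rewrite <- (dyad_0 L), <- (dyad_full L); split; apply dyad_le; lia. Qed.

Lemma dyad_halves (L l : nat) :
  dyad L l = dyad (S L) (2 * l) /\
  dyad L l + / 2 ^ S L = dyad (S L) (S (2 * l)) /\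
  dyad L l + / 2 ^ S L + / 2 ^ S L = dyad L (S l).
Proof.
  assert (E : dyad L l = dyad (S L) (2 * l)) by (rewrite (dyad_refine 1); f_equal; simpl; lia).
  split; [exact E|]. rewrite E, <- !dyad_S. split; [reflexivity|].
  rewrite (dyad_refine 1 L (S l)). f_equal; simpl; lia.
Qed.

Definition grid_free (P : nat) (a b : R) : Prop :=
  forall k : nat, dyad P k <= a \/ b <= dyad P k.

Lemma dyad_cell_grid_free (P L l : nat) :
  (P <= L)%nat -> grid_free P (dyad L l) (dyad L (S l)).
Proof.
  intros HPL k. rewrite (dyad_refine (L - P) P k).
  replace (P + (L - P))%nat with L by lia.
  destruct (Nat.le_gt_cases (k * 2 ^ (L - P)) l); [left|right]; apply dyad_le; lia.
Qed.

Lemma dyad_cell_within (P L l : nat) : (P <= L)%nat -> (l < 2 ^ L)%nat ->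
  exists K, (K < 2 ^ P)%nat /\ dyad P K <= dyad L l /\ dyad L (S l) <= dyad P (S K).
Proof.
  intros HPL Hl. exists (l / 2 ^ (L - P))%nat.
  assert (HE : (2 ^ L = 2 ^ P * 2 ^ (L - P))%nat) by (rewrite <- Nat.pow_add_r; f_equal; lia).
  assert (Hpos : (2 ^ (L - P) <> 0)%nat) by (apply Nat.pow_nonzero; lia).
  pose proof (Nat.div_mod l (2 ^ (L - P)) Hpos).
  pose proof (Nat.mod_upper_bound l (2 ^ (L - P)) Hpos).
  rewrite !(dyad_refine (L - P) P). replace (P + (L - P))%nat with L by lia.
  repeat split; [apply Nat.Div0.div_lt_upper_bound|apply dyad_le|apply dyad_le]; nia.
Qed.

Lemma schauder_points_dyad (p m : nat) : (1 <= m)%nat ->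
  t0 p m = dyad (S p) (2 * m - 2) /\ t1 p m = dyad (S p) (2 * m - 1) /\
  t2 p m = dyad (S p) (2 * m).
Proof.
  intros Hm. pose proof (pow2_pos p). unfold t0, t1, t2, dyad.
  rewrite !minus_INR, mult_INR by lia. simpl INR. simpl pow.
  repeat split; field; lra.
Qed.

Lemma schauder_points_scaled (p m : nat) :
  2 ^ p * t0 p m = INR m - 1 /\ 2 ^ p * t1 p m = INR m - / 2 /\ 2 ^ p * t2 p m = INR m.
Proof. pose proof (pow2_pos p). unfold t0, t1, t2. simpl. repeat split; field; lra. Qed.

Lemma grid_free_schauder_points (p m : nat) (a b : R) :
  (1 <= m)%nat -> grid_free (S p) a b ->
  (t0 p m <= a \/ b <= t0 p m) /\ (t1 p m <= a \/ b <= t1 p m) /\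
  (t2 p m <= a \/ b <= t2 p m).
Proof.
  intros Hm Hng. destruct (schauder_points_dyad p m Hm) as (-> & -> & ->). auto.
Qed.

Lemma phi_affine_on (p m : nat) (a b s : R) : a < b -> grid_free (S p) a b -> a <= s <= b ->
  phi p m s = phi p m a + chi p m a * (s - a).
Proof.
  intros Hab Hng Hs. unfold phi, chi.
  destruct (m =? 0)%nat eqn:Em; [destruct (p =? 0)%nat; ring|].
  apply Nat.eqb_neq in Em.
  destruct (grid_free_schauder_points p m a b ltac:(lia) Hng) as (N0 & N1 & N2).
  destruct (schauder_points_scaled p m) as (F0 & F1 & F2). pose proof (pow2_pos p).
  destruct (Rle_dec (t0 p m) s); destruct (Rle_dec s (t1 p m)); destruct (Rle_dec s (t2 p m));
  destruct (Rle_dec (t0 p m) a); destruct (Rle_dec a (t1 p m)); destruct (Rle_dec a (t2 p m));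
  destruct (Rlt_dec a (t1 p m)); destruct (Rlt_dec a (t2 p m)); nra.
Qed.

Lemma chi_const_on (p m : nat) (a b s : R) : grid_free (S p) a b -> a <= s < b ->
  chi p m s = chi p m a.
Proof.
  intros Hng Hs. unfold chi.
  destruct (m =? 0)%nat eqn:Em; [reflexivity|].
  apply Nat.eqb_neq in Em.
  destruct (grid_free_schauder_points p m a b ltac:(lia) Hng) as (N0 & N1 & N2).
  destruct (Rle_dec (t0 p m) s); destruct (Rlt_dec s (t1 p m)); destruct (Rlt_dec s (t2 p m));
  destruct (Rle_dec (t0 p m) a); destruct (Rlt_dec a (t1 p m)); destruct (Rlt_dec a (t2 p m));
  lra.
Qed.

Lemma sum_f_R0_affine (x y z : nat -> R) (c : R) (N : nat) :
  (forall m, (m <= N)%nat -> x m = y m + z m * c) ->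
  sum_f_R0 x N = sum_f_R0 y N + sum_f_R0 z N * c.
Proof.
  induction N as [|N IH]; simpl; intros H; [apply H; lia|].
  rewrite IH by (intros; apply H; lia). rewrite H by lia. ring.
Qed.

Lemma DeltaN_affine_on (f : R -> R) (p : nat) (a b s : R) :
  a < b -> grid_free (S p) a b -> a <= s <= b ->
  DeltaN f p s = DeltaN f p a + dSDelta f p a * (s - a).
Proof.
  intros. unfold DeltaN, dSDelta. apply sum_f_R0_affine. intros m _.
  rewrite (phi_affine_on p m a b s) by auto. ring.
Qed.

Lemma dSDelta_const_on (f : R -> R) (p : nat) (a b s : R) :
  grid_free (S p) a b -> a <= s < b -> dSDelta f p s = dSDelta f p a.
Proof. intros. unfold dSDelta. apply sum_eq. intros m _. rewrite (chi_const_on p m a b s); auto. Qed.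

Lemma SDelta_nonneg (f : R -> R) (p : Z) (t : R) :
  (0 <= p)%Z -> SDelta f p t = DeltaN f (Z.to_nat p) t.
Proof. intros. unfold SDelta. destruct (Z.ltb_spec p 0); [lia|reflexivity]. Qed.

Definition slope (f : R -> R) (p : Z) (a : R) : R :=
  if (p <? 0)%Z then 0 else dSDelta f (Z.to_nat p) a.

Lemma SDelta_affine_on (f : R -> R) (p : Z) (a b s : R) : (-1 <= p)%Z -> a < b ->
  grid_free (Z.to_nat (p + 1)) a b -> a <= s <= b ->
  SDelta f p s = SDelta f p a + slope f p a * (s - a).
Proof.
  intros Hp Hab Hng Hs. unfold SDelta, slope. destruct (Z.ltb_spec p 0); [ring|].
  apply (DeltaN_affine_on f _ a b); auto.
  replace (S (Z.to_nat p)) with (Z.to_nat (p + 1)) by lia. auto.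
Qed.

Lemma phi_vanish_dyad (p m l : nat) : (1 <= p)%nat -> phi p m (dyad p l) = 0.
Proof.
  intros Hp. unfold phi.
  destruct (m =? 0)%nat eqn:Em.
  { destruct (Nat.eqb_spec p 0); [lia|reflexivity]. }
  apply Nat.eqb_neq in Em.
  destruct (schauder_points_scaled p m) as (F0 & F1 & F2). pose proof (pow2_pos p).
  assert (Es : 2 ^ p * dyad p l = INR l) by (unfold dyad; field; lra).
  assert (D : INR l <= INR m - 1 \/ INR m <= INR l).
  { destruct (Nat.le_gt_cases m l); [right; apply le_INR; lia|left].
    replace (INR m - 1) with (INR (m - 1)) by (rewrite minus_INR by lia; simpl; ring).
    apply le_INR; lia. }
  set (s := dyad p l) in *.
  destruct (Rle_dec (t0 p m) s); destruct (Rle_dec s (t1 p m)); destruct (Rle_dec s (t2 p m));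
    try nra.
Qed.

Lemma DeltaN_vanish_dyad (f : R -> R) (p l : nat) : (1 <= p)%nat -> DeltaN f p (dyad p l) = 0.
Proof.
  intros. unfold DeltaN. rewrite (sum_eq _ (fun _ => 0)).
  - induction (2 ^ p)%nat; simpl; lra.
  - intros m _. rewrite phi_vanish_dyad; auto; ring.
Qed.

(* On a dyadic cell of level [S p], [DeltaN f p] is affine, so its slope is the
   difference of its end values divided by the cell length. *)
Lemma dSDelta_dyad_le (p L l : nat) : (S p <= L)%nat -> (l < 2 ^ L)%nat ->
  exists a b, 0 <= a <= 1 /\ 0 <= b <= 1 /\ forall f,
  Rabs (dSDelta f p (dyad L l)) <= 2 ^ S p * (Rabs (DeltaN f p a) + Rabs (DeltaN f p b)).
Proof.
  intros HL Hl. destruct (dyad_cell_within (S p) L l HL Hl) as (K & HK & H1 & H2).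
  exists (dyad (S p) K), (dyad (S p) (S K)).
  split; [apply dyad_in_01; lia|]. split; [apply dyad_in_01; lia|]. intros f.
  set (a := dyad (S p) K) in *. set (b := dyad (S p) (S K)) in *.
  pose proof (pow2_pos (S p)) as PP. pose proof (Rinv_0_lt_compat _ PP).
  assert (Hab : b = a + / 2 ^ S p) by apply dyad_S.
  assert (Hng : grid_free (S p) a b) by apply dyad_cell_grid_free, le_n.
  assert (Hx : a <= dyad L l < b).
  { split; [exact H1|]. eapply Rlt_le_trans; [|exact H2].
    rewrite dyad_S. pose proof (Rinv_0_lt_compat _ (pow2_pos L)). lra. }
  rewrite (dSDelta_const_on f p a b) by auto.
  pose proof (DeltaN_affine_on f p a b b ltac:(lra) Hng ltac:(lra)) as E.
  replace (dSDelta f p a) with (2 ^ S p * (DeltaN f p b - DeltaN f p a))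
    by (rewrite E, Hab; field; lra).
  rewrite Rabs_mult, (Rabs_right (2 ^ S p)) by lra.
  apply Rmult_le_compat_l; [lra|].
  unfold Rminus. eapply Rle_trans; [apply Rabs_triang|]. rewrite Rabs_Ropp. lra.
Qed.

Lemma RiemannInt_affine (H : R -> R) (x y : R) (pr : Riemann_integrable H x y) (al be : R) :
  x < y -> (forall s, x < s < y -> H s = be + al * (s - x)) ->
  RiemannInt pr = (y - x) * (be + al * (y - x) / 2).
Proof.
  intros Hxy Hs. rewrite <- RInt_Reals.
  rewrite (RInt_ext H (fun s => be + al * (s - x))).
  2:{ intros s Hs'. rewrite Rmin_left, Rmax_right in Hs' by lra. apply Hs; lra. }
  apply is_RInt_unique.
  set (G := fun s => be * (s - x) + al * (s - x) ^ 2 / 2).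
  replace ((y - x) * (be + al * (y - x) / 2)) with (G y - G x) by (unfold G; simpl; field).
  apply (is_RInt_derive G).
  - intros s _. unfold G. auto_derive; auto. simpl; field.
  - intros s _. apply (ex_derive_continuous (fun s => be + al * (s - x))). auto_derive; auto.
Qed.

Lemma phi_range (p m : nat) (t : R) : (1 <= m)%nat ->
  0 <= phi p m t <= / 2 /\ (t <= t0 p m -> phi p m t = 0) /\ (t2 p m <= t -> phi p m t = 0).
Proof.
  intros Hm. unfold phi. destruct (Nat.eqb_spec m 0); [lia|].
  destruct (schauder_points_scaled p m) as (F0 & F1 & F2). pose proof (pow2_pos p).
  destruct (Rle_dec (t0 p m) t); destruct (Rle_dec t (t1 p m)); destruct (Rle_dec t (t2 p m));
    repeat split; intros; nra.
Qed.

(* The hat functions of one level have disjoint supports of height [1/2]. *)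
Lemma phi_partial_sum_le (p N : nat) (t : R) :
  sum_f_R0 (fun m => phi p (S m) t) N <= / 2 /\
  (dyad p (S N) <= t -> sum_f_R0 (fun m => phi p (S m) t) N = 0).
Proof.
  pose proof (pow2_pos p) as PP.
  induction N as [|N [I1 I2]]; simpl sum_f_R0.
  - destruct (phi_range p 1 t) as (A1 & A2 & A3); [lia|]. split; [lra|].
    intros; apply A3; exact H.
  - destruct (phi_range p (S (S N)) t) as (A1 & A2 & A3); [lia|].
    assert (E0 : t0 p (S (S N)) = dyad p (S N))
      by (unfold t0, dyad; rewrite (S_INR (S N)); field; lra).
    assert (Hlt : dyad p (S N) < dyad p (S (S N)))
      by (rewrite (dyad_S p (S N)); pose proof (Rinv_0_lt_compat _ PP); lra).
    destruct (Rle_dec (dyad p (S N)) t).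
    + rewrite I2 by auto. split; [lra|]. intros; rewrite A3; [ring|exact H].
    + rewrite A2 by lra. split; [lra|]. intros; lra.
Qed.

Lemma DeltaN_abs_le (G : R -> R) (p : nat) (t M : R) : 0 <= t <= 1 ->
  (p = 0%nat -> Rabs (G 1 - G 0) <= M) ->
  (forall m, (1 <= m <= 2 ^ p)%nat -> Rabs (scoef G p m) <= M) ->
  Rabs (DeltaN G p t) <= 2 * M.
Proof.
  intros Ht H0 Hm. unfold DeltaN.
  assert (Npos : (0 < 2 ^ p)%nat) by (apply Nat.neq_0_lt_0, Nat.pow_nonzero; lia).
  assert (HM : 0 <= M) by (eapply Rle_trans; [apply Rabs_pos|apply (Hm 1%nat); lia]).
  rewrite decomp_sum by exact Npos.
  eapply Rle_trans; [apply Rabs_triang|].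
  apply Rle_trans with (M + M / 2); [apply Rplus_le_compat|lra].
  - unfold scoef, phi. simpl Nat.eqb. destruct (Nat.eqb_spec p 0) as [E|E].
    + rewrite Rabs_mult, (Rabs_right t) by lra. specialize (H0 E). nra.
    + rewrite Rmult_0_l, Rabs_R0; lra.
  - eapply Rle_trans; [apply sum_f_R0_triangle|].
    apply Rle_trans with (sum_f_R0 (fun m => phi p (S m) t * M) (Nat.pred (2 ^ p))).
    + apply sum_Rle. intros m Hm'. rewrite Rabs_mult.
      destruct (phi_range p (S m) t) as (A1 & _ & _); [lia|].
      rewrite (Rabs_right (phi _ _ _)), (Rmult_comm (phi _ _ _)) by lra.
      apply Rmult_le_compat_r; [lra|]. apply Hm. lia.
    + rewrite <- scal_sum. destruct (phi_partial_sum_le p (Nat.pred (2 ^ p)) t) as [P1 _].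
      unfold Rdiv. apply Rmult_le_compat_l; auto.
Qed.

Definition rate (i p q : Z) : R :=
  if ((i =? q)%Z && (p <? q)%Z)%bool then 1
  else powerRZ 2 (- Z.max i (Z.max p q) - i + p + q).

Lemma rate_pos (i p q : Z) : 0 < rate i p q.
Proof. unfold rate; destruct (_ && _)%bool; [lra|apply powerRZ_lt; lra]. Qed.

Lemma rate_exceptional (i p q : Z) : i = q -> (p < q)%Z -> rate i p q = 1.
Proof. intros -> Hpq. unfold rate. now rewrite Z.eqb_refl, (proj2 (Z.ltb_lt p q) Hpq). Qed.

Lemma rate_generic (i p q : Z) : (i <> q \/ (q <= p)%Z) ->
  rate i p q = powerRZ 2 (- Z.max i (Z.max p q) - i + p + q).
Proof.
  intros H. unfold rate. replace ((i =? q)%Z && (p <? q)%Z)%bool with false; [reflexivity|].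
  symmetry; apply andb_false_iff. destruct H; [left; apply Z.eqb_neq|right; apply Z.ltb_ge]; lia.
Qed.

Lemma powerRZ2_sub (a b : nat) : powerRZ 2 (Z.of_nat a - Z.of_nat b) = 2 ^ a / 2 ^ b.
Proof. unfold Z.sub. rewrite powerRZ_add by lra. now rewrite powerRZ_neg', <- !pow_powerRZ. Qed.

Section Estimates.

Variables (d : nat) (p : Z) (qn : nat) (f g : nat -> R -> R) (F : R -> R) (A B : R).

Hypothesis Hp : (-1 <= p)%Z.

Definition integrand (s : R) : R := fsum d (fun j => SDelta (f j) p s * dSDelta (g j) qn s).

Hypothesis HF : forall t, 0 <= t <= 1 ->
  exists pr : Riemann_integrable integrand 0 t, F t = RiemannInt pr.
Hypothesis HA : forall s, 0 <= s <= 1 -> fsum d (fun j => Rabs (SDelta (f j) p s)) <= A.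
Hypothesis HB : forall s, 0 <= s <= 1 -> forall j, (j < d)%nat -> Rabs (DeltaN (g j) qn s) <= B.
Hypothesis HA0 : 0 <= A.
Hypothesis HB0 : 0 <= B.

Lemma F_zero : F 0 = 0.
Proof. destruct (HF 0) as [pr E]; [lra|]. rewrite E. apply RiemannInt_P9. Qed.

Lemma F_sub_integral (x y : R) : 0 <= x <= y -> y <= 1 ->
  exists pr : Riemann_integrable integrand x y, F y - F x = RiemannInt pr.
Proof.
  intros Hx Hy. destruct (HF x) as [pr0 E0]; [lra|]. destruct (HF y) as [pr1 E1]; [lra|].
  exists (RiemannInt_P23 pr1 Hx). rewrite E0, E1.
  rewrite <- (RiemannInt_P26 (RiemannInt_P22 pr1 Hx) (RiemannInt_P23 pr1 Hx) pr1).
  rewrite (RiemannInt_P5 (RiemannInt_P22 pr1 Hx) pr0). ring.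
Qed.

Lemma F_cell_increment (L l : nat) (x h : R) :
  (Z.to_nat (p + 1) <= L)%nat -> (S qn <= L)%nat -> (l < 2 ^ L)%nat ->
  x = dyad L l -> h = / 2 ^ L ->
  F (x + h) - F x = h * fsum d (fun j => SDelta (f j) p (x + h / 2) * dSDelta (g j) qn x).
Proof.
  intros HpL HqL Hl -> ->.
  pose proof (dyad_S L l) as Exh.
  destruct (dyad_in_01 L l) as [Hx0 _]; [lia|].
  destruct (dyad_in_01 L (S l)) as [_ Hx1]; [lia|].
  set (x := dyad L l) in *. set (h := / 2 ^ L) in *.
  assert (Hh : 0 < h) by apply Rinv_0_lt_compat, pow2_pos.
  assert (Ngp : grid_free (Z.to_nat (p + 1)) x (x + h))
    by (rewrite <- Exh; apply dyad_cell_grid_free, HpL).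
  assert (Ngq : grid_free (S qn) x (x + h)) by (rewrite <- Exh; apply dyad_cell_grid_free, HqL).
  destruct (F_sub_integral x (x + h)) as [pr ->]; [lra|lra|].
  rewrite (RiemannInt_affine integrand x (x + h) pr
     (fsum d (fun j => slope (f j) p x * dSDelta (g j) qn x))
     (fsum d (fun j => SDelta (f j) p x * dSDelta (g j) qn x))); [|lra|].
  - replace (x + h - x) with h by ring. f_equal.
    transitivity (fsum d (fun j => SDelta (f j) p x * dSDelta (g j) qn x
                                   + h / 2 * (slope (f j) p x * dSDelta (g j) qn x))).
    + rewrite fsum_plus, fsum_scal; field.
    + apply fsum_ext; intros j _.
      rewrite (SDelta_affine_on (f j) p x (x + h) (x + h / 2)) by (auto; lra). ring.
  - intros s Hs. unfold integrand.
    transitivity (fsum d (fun j => SDelta (f j) p x * dSDelta (g j) qn x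
                                   + (s - x) * (slope (f j) p x * dSDelta (g j) qn x))).
    + apply fsum_ext; intros j _.
      rewrite (SDelta_affine_on (f j) p x (x + h) s), (dSDelta_const_on (g j) qn x (x + h) s)
        by (auto; lra).
      ring.
    + rewrite fsum_plus, fsum_scal; ring.
Qed.

Lemma dSDelta_g_le (L l j : nat) : (S qn <= L)%nat -> (l < 2 ^ L)%nat -> (j < d)%nat ->
  Rabs (dSDelta (g j) qn (dyad L l)) <= 2 ^ S qn * (2 * B).
Proof.
  intros HL Hl Hj. destruct (dSDelta_dyad_le qn L l HL Hl) as (a & b & Ha & Hb & H).
  eapply Rle_trans; [apply H|]. pose proof (pow2_pos (S qn)).
  apply Rmult_le_compat_l; [lra|]. pose proof (HB a Ha j Hj); pose proof (HB b Hb j Hj). lra.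
Qed.

Lemma slope_f_sum_le (L l : nat) : (Z.to_nat (p + 1) <= L)%nat -> (l < 2 ^ L)%nat ->
  fsum d (fun j => Rabs (slope (f j) p (dyad L l))) <= 2 ^ Z.to_nat (p + 1) * (2 * A).
Proof.
  intros HL Hl. pose proof (pow2_pos (Z.to_nat (p + 1))). unfold slope.
  destruct (Z.ltb_spec p 0).
  - rewrite (fsum_ext d _ (fun _ => 0 * 0)) by (intros; rewrite Rabs_R0; ring).
    rewrite fsum_scal. nra.
  - replace (Z.to_nat (p + 1)) with (S (Z.to_nat p)) in * by lia.
    destruct (dSDelta_dyad_le (Z.to_nat p) L l HL Hl) as (a & b & Ha & Hb & Hab).
    eapply Rle_trans; [apply fsum_le; intros j _; apply Hab|].
    rewrite fsum_scal, fsum_plus. apply Rmult_le_compat_l; [lra|].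
    assert (E : forall s, fsum d (fun j => Rabs (SDelta (f j) p s))
                        = fsum d (fun j => Rabs (DeltaN (f j) (Z.to_nat p) s)))
      by (intros; apply fsum_ext; intros; now rewrite SDelta_nonneg by lia).
    pose proof (HA a Ha); pose proof (HA b Hb). rewrite !E in *. lra.
Qed.

Lemma increment_le (L l : nat) :
  (Z.to_nat (p + 1) <= L)%nat -> (S qn <= L)%nat -> (l < 2 ^ L)%nat ->
  Rabs (F (dyad L (S l)) - F (dyad L l)) <= / 2 ^ L * (A * (2 ^ S qn * (2 * B))).
Proof.
  intros HpL HqL Hl. pose proof (Rinv_0_lt_compat _ (pow2_pos L)) as Hh.
  destruct (dyad_in_01 L l) as [Hx0 _]; [lia|].
  destruct (dyad_in_01 L (S l)) as [_ Hx1]; [lia|]. rewrite dyad_S in Hx1.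
  rewrite dyad_S, (F_cell_increment L l (dyad L l) (/ 2 ^ L)) by auto.
  rewrite Rabs_mult, Rabs_right by lra.
  apply Rmult_le_compat_l; [lra|].
  eapply Rle_trans; [apply fsum_mul_abs_le; intros j Hj; apply dSDelta_g_le; eauto|].
  apply Rmult_le_compat_r; [pose proof (pow2_pos (S qn)); nra|].
  apply HA. lra.
Qed.

(* Two adjacent half-cells: if [(Δ_q g)'] takes the values [c] and [sigma c] on them, the
   zeroth-order terms of [Δ_p f] cancel in the combination below and only its slope survives. *)
Lemma two_cell_defect (sigma : R) (L l : nat) (x h : R) :
  (Z.to_nat (p + 1) <= L)%nat -> (qn <= L)%nat -> (l < 2 ^ L)%nat -> sigma * sigma = 1 ->
  x = dyad L l -> h = / 2 ^ S L ->
  (forall j, dSDelta (g j) qn (x + h) = sigma * dSDelta (g j) qn x) ->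
  Rabs ((F (x + h) - F x) - sigma * (F (x + h + h) - F (x + h)))
    <= h ^ 2 * (2 ^ Z.to_nat (p + 1) * (2 * A)) * (2 ^ S qn * (2 * B)).
Proof.
  intros HpL HqL Hl Hsigma Ex Eh Hc.
  destruct (dyad_halves L l) as (Ex2 & Exh & Exhh). rewrite <- Ex, <- Eh in *.
  assert (Hh : 0 < h) by (rewrite Eh; apply Rinv_0_lt_compat, pow2_pos).
  assert (Ngp : grid_free (Z.to_nat (p + 1)) x (x + h + h))
    by (rewrite Exhh, Ex; apply dyad_cell_grid_free, HpL).
  pose proof (F_cell_increment (S L) (2 * l) x h ltac:(lia) ltac:(lia) ltac:(simpl; lia) Ex2 Eh)
    as I1.
  pose proof (F_cell_increment (S L) (S (2 * l)) (x + h) h ltac:(lia) ltac:(lia)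
    ltac:(simpl; lia) Exh Eh) as I2.
  assert (Hs2 : forall u v, - sigma * (u * (sigma * v)) = - (u * v))
    by (intros u v; transitivity (- (sigma * sigma) * (u * v)); [ring|rewrite Hsigma; ring]).
  assert (Eq : (F (x + h) - F x) - sigma * (F (x + h + h) - F (x + h))
               = - h ^ 2 * fsum d (fun j => slope (f j) p x * dSDelta (g j) qn x)).
  { rewrite I1, I2.
    replace (- h ^ 2 * fsum d (fun j => slope (f j) p x * dSDelta (g j) qn x))
      with (h * fsum d (fun j => - h * (slope (f j) p x * dSDelta (g j) qn x)))
      by (rewrite fsum_scal; ring).
    match goal with |- h * ?X - sigma * (h * ?Y) = _ =>
      replace (h * X - sigma * (h * Y)) with (h * (X + - sigma * Y)) by ring end.
    rewrite <- fsum_scal, <- fsum_plus. f_equal. apply fsum_ext. intros j _.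
    rewrite Hc, Hs2.
    rewrite (SDelta_affine_on (f j) p x (x + h + h) (x + h / 2)),
            (SDelta_affine_on (f j) p x (x + h + h) (x + h + h / 2)) by (auto; lra).
    ring. }
  rewrite Eq, Rabs_mult, Rabs_Ropp, (Rabs_right (h ^ 2)) by (apply Rle_ge, pow_le; lra).
  rewrite Rmult_assoc. apply Rmult_le_compat_l; [apply pow_le; lra|].
  rewrite Ex2.
  eapply Rle_trans.
  { apply fsum_mul_abs_le. intros j Hj. apply dSDelta_g_le; [lia|simpl; lia|exact Hj]. }
  apply Rmult_le_compat_r; [pose proof (pow2_pos (S qn)); nra|].
  apply slope_f_sum_le; [lia|simpl; lia].
Qed.

(* On a cell of level [q], [Δ_q g] vanishes at both ends, so its slope changes sign
   at the midpoint. *)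
Lemma increment_cancel (l : nat) :
  (1 <= qn)%nat -> (Z.to_nat (p + 1) <= qn)%nat -> (l < 2 ^ qn)%nat ->
  Rabs (F (dyad qn (S l)) - F (dyad qn l))
    <= (/ 2 ^ S qn) ^ 2 * (2 ^ Z.to_nat (p + 1) * (2 * A)) * (2 ^ S qn * (2 * B)).
Proof.
  intros Hq HpL Hl.
  destruct (dyad_halves qn l) as (Ex2 & Exh & Exhh).
  set (x := dyad qn l) in *. set (h := / 2 ^ S qn) in *.
  assert (Hh : 0 < h) by apply Rinv_0_lt_compat, pow2_pos.
  assert (Hc : forall j, dSDelta (g j) qn (x + h) = -1 * dSDelta (g j) qn x).
  { intros j.
    assert (Ng1 : grid_free (S qn) x (x + h))
      by (rewrite Exh, Ex2; apply dyad_cell_grid_free, le_n).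
    assert (Ng2 : grid_free (S qn) (x + h) (x + h + h))
      by (rewrite Exh; unfold h; rewrite <- dyad_S; apply dyad_cell_grid_free, le_n).
    pose proof (DeltaN_affine_on (g j) qn x (x + h) (x + h) ltac:(lra) Ng1 ltac:(lra)) as D1.
    pose proof (DeltaN_affine_on (g j) qn (x + h) (x + h + h) (x + h + h)
      ltac:(lra) Ng2 ltac:(lra)) as D2.
    assert (V1 : DeltaN (g j) qn x = 0) by (apply DeltaN_vanish_dyad, Hq).
    assert (V2 : DeltaN (g j) qn (x + h + h) = 0)
      by (rewrite Exhh; apply DeltaN_vanish_dyad, Hq).
    apply (Rmult_eq_reg_r h); [|lra]. nra. }
  rewrite <- Exhh.
  replace (F (x + h + h) - F x)
    with ((F (x + h) - F x) - -1 * (F (x + h + h) - F (x + h))) by ring.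
  apply (two_cell_defect (-1) qn l); auto; ring.
Qed.

(* For [q < i] the slope of [Δ_q g] is constant on a cell of level [i]. *)
Lemma scoef_cancel (i m : nat) :
  (qn < i)%nat -> (Z.to_nat (p + 1) <= i)%nat -> (1 <= m <= 2 ^ i)%nat ->
  Rabs (scoef F i m)
    <= (/ 2 ^ S i) ^ 2 * (2 ^ Z.to_nat (p + 1) * (2 * A)) * (2 ^ S qn * (2 * B)).
Proof.
  intros Hqi HpL Hm. unfold scoef. destruct (Nat.eqb_spec m 0); [lia|].
  destruct (schauder_points_dyad i m) as (T0 & T1 & T2); [lia|].
  destruct (dyad_halves i (m - 1)) as (Ex2 & Exh & Exhh).
  replace (S (m - 1)) with m in Exhh by lia.
  replace (2 * (m - 1))%nat with (2 * m - 2)%nat in Ex2, Exh by lia.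
  replace (S (2 * m - 2)) with (2 * m - 1)%nat in Exh by lia.
  rewrite T0, T1, T2, <- Ex2, <- Exh.
  replace (dyad (S i) (2 * m)) with (dyad i m) by (rewrite (dyad_refine 1 i m); f_equal; simpl; lia).
  rewrite <- Exhh.
  set (x := dyad i (m - 1)) in *. set (h := / 2 ^ S i) in *.
  assert (Hh : 0 < h) by apply Rinv_0_lt_compat, pow2_pos.
  assert (Hc : forall j, dSDelta (g j) qn (x + h) = 1 * dSDelta (g j) qn x).
  { intros j. rewrite Rmult_1_l. apply (dSDelta_const_on (g j) qn x (x + h + h)); [|lra].
    rewrite Exhh; unfold x. replace m with (S (m - 1)) at 2 by lia.
    apply dyad_cell_grid_free; lia. }
  replace (2 * F (x + h) - F x - F (x + h + h))
    with ((F (x + h) - F x) - 1 * (F (x + h + h) - F (x + h))) by ring.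
  apply (two_cell_defect 1 i (m - 1)); auto; [lia|lia|ring].
Qed.

Lemma increments_sum_le (L : nat) (E : R) :
  (forall l, (l < 2 ^ L)%nat -> Rabs (F (dyad L (S l)) - F (dyad L l)) <= E) ->
  forall N l0, (l0 + N <= 2 ^ L)%nat ->
  Rabs (F (dyad L (l0 + N)) - F (dyad L l0)) <= INR N * E.
Proof.
  intros H N. induction N as [|N IH]; intros l0 Hl.
  - rewrite Nat.add_0_r, Rminus_diag_eq, Rabs_R0 by reflexivity. simpl; lra.
  - replace (F (dyad L (l0 + S N)) - F (dyad L l0))
      with ((F (dyad L (S (l0 + N))) - F (dyad L (l0 + N))) + (F (dyad L (l0 + N)) - F (dyad L l0)))
      by (rewrite <- plus_n_Sm; ring).
    eapply Rle_trans; [apply Rabs_triang|]. rewrite S_INR.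
    pose proof (H (l0 + N)%nat ltac:(lia)). pose proof (IH l0 ltac:(lia)). lra.
Qed.

Lemma DeltaN_le_of_increments (i e : nat) (E t : R) : 0 <= t <= 1 ->
  (forall l, (l < 2 ^ (S i + e))%nat ->
     Rabs (F (dyad (S i + e) (S l)) - F (dyad (S i + e) l)) <= E) ->
  Rabs (DeltaN F i t) <= 4 * 2 ^ e * E.
Proof.
  intros Ht Hinc. pose proof (increments_sum_le _ E Hinc) as Hsum.
  replace (4 * 2 ^ e * E) with (2 * (2 * 2 ^ e * E)) by ring.
  apply DeltaN_abs_le; [exact Ht| |].
  - intros ->.
    replace (F 1 - F 0) with (F (dyad (S 0 + e) (0 + 2 ^ (S 0 + e))) - F (dyad (S 0 + e) 0))
      by (rewrite Nat.add_0_l, dyad_full, dyad_0; reflexivity).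
    eapply Rle_trans; [apply Hsum; lia|]. rewrite INR_pow2. apply Req_le. simpl; ring.
  - intros m Hm. unfold scoef. destruct (Nat.eqb_spec m 0); [lia|].
    destruct (schauder_points_dyad i m) as (-> & -> & ->); [lia|].
    rewrite !(dyad_refine e (S i)).
    replace ((2 * m - 1) * 2 ^ e)%nat with ((2 * m - 2) * 2 ^ e + 2 ^ e)%nat by nia.
    replace ((2 * m) * 2 ^ e)%nat with ((2 * m - 2) * 2 ^ e + 2 ^ e + 2 ^ e)%nat by nia.
    assert (Hk : ((2 * m - 2) * 2 ^ e + 2 ^ e + 2 ^ e <= 2 ^ (S i + e))%nat)
      by (rewrite Nat.pow_add_r; simpl; nia).
    pose proof (Hsum (2 ^ e)%nat ((2 * m - 2) * 2 ^ e)%nat ltac:(lia)) as S1.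
    pose proof (Hsum (2 ^ e)%nat ((2 * m - 2) * 2 ^ e + 2 ^ e)%nat Hk) as S2.
    rewrite INR_pow2 in S1, S2.
    match goal with |- Rabs (2 * F ?y - F ?x - F ?z) <= _ =>
      replace (2 * F y - F x - F z) with ((F y - F x) - (F z - F y)) by ring end.
    eapply Rle_trans; [apply Rabs_triang|]. rewrite Rabs_Ropp. lra.
Qed.


Lemma estimate_exceptional (i : nat) (t : R) : 0 <= t <= 1 ->
  i = qn -> (p < Z.of_nat qn)%Z ->
  Rabs (DeltaN F i t) <= 8 * rate (Z.of_nat i) p (Z.of_nat qn) * A * B.
Proof.
  intros Ht -> Hpq. rewrite rate_exceptional by auto.
  eapply Rle_trans.
  { apply (DeltaN_le_of_increments qn 0 (/ 2 ^ S qn * (A * (2 ^ S qn * (2 * B))))); [exact Ht|].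
    intros l Hl. rewrite Nat.add_0_r in *. apply increment_le; lia. }
  apply Req_le. pose proof (pow2_pos (S qn)). simpl pow at 1. field. lra.
Qed.

Lemma estimate_p_dominant (i : nat) (t : R) : 0 <= t <= 1 ->
  (Z.of_nat i <= p)%Z -> (Z.of_nat qn <= p)%Z ->
  Rabs (DeltaN F i t) <= 8 * rate (Z.of_nat i) p (Z.of_nat qn) * A * B.
Proof.
  intros Ht Hip Hqp. rewrite rate_generic by lia.
  replace (- Z.max (Z.of_nat i) (Z.max p (Z.of_nat qn)) - Z.of_nat i + p + Z.of_nat qn)%Z
    with (Z.of_nat qn - Z.of_nat i)%Z by lia.
  rewrite powerRZ2_sub.
  eapply Rle_trans.
  { apply (DeltaN_le_of_increments i (Z.to_nat p - i)
      (/ 2 ^ S (Z.to_nat p) * (A * (2 ^ S qn * (2 * B))))); [exact Ht|].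
    replace (S i + (Z.to_nat p - i))%nat with (S (Z.to_nat p)) by lia.
    intros l Hl. apply increment_le; lia. }
  rewrite pow2_sub by lia. apply Req_le.
  pose proof (pow2_pos (Z.to_nat p)). pose proof (pow2_pos i). simpl. field. lra.
Qed.

Lemma estimate_q_dominant (i : nat) (t : R) : 0 <= t <= 1 ->
  (p < Z.of_nat qn)%Z -> (i < qn)%nat ->
  Rabs (DeltaN F i t) <= 8 * rate (Z.of_nat i) p (Z.of_nat qn) * A * B.
Proof.
  intros Ht Hpq Hiq. rewrite rate_generic by lia.
  replace (- Z.max (Z.of_nat i) (Z.max p (Z.of_nat qn)) - Z.of_nat i + p + Z.of_nat qn)%Z
    with (Z.of_nat (Z.to_nat (p + 1)) - Z.of_nat (S i))%Z by lia.
  rewrite powerRZ2_sub.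
  eapply Rle_trans.
  { apply (DeltaN_le_of_increments i (qn - S i) ((/ 2 ^ S qn) ^ 2
      * (2 ^ Z.to_nat (p + 1) * (2 * A)) * (2 ^ S qn * (2 * B)))); [exact Ht|].
    replace (S i + (qn - S i))%nat with qn by lia.
    intros l Hl. apply increment_cancel; lia. }
  rewrite pow2_sub by lia. apply Req_le.
  pose proof (pow2_pos qn). pose proof (pow2_pos i). simpl. field. lra.
Qed.

Lemma estimate_i_dominant (i : nat) (t : R) : 0 <= t <= 1 ->
  (p < Z.of_nat i)%Z -> (qn < i)%nat ->
  Rabs (DeltaN F i t) <= 8 * rate (Z.of_nat i) p (Z.of_nat qn) * A * B.
Proof.
  intros Ht Hpi Hqi. rewrite rate_generic by lia.
  replace (- Z.max (Z.of_nat i) (Z.max p (Z.of_nat qn)) - Z.of_nat i + p + Z.of_nat qn)%Z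
    with (Z.of_nat (Z.to_nat (p + 1) + S qn) - Z.of_nat (S i + S i))%Z by lia.
  rewrite powerRZ2_sub.
  eapply Rle_trans.
  { apply (DeltaN_abs_le F i t ((/ 2 ^ S i) ^ 2
      * (2 ^ Z.to_nat (p + 1) * (2 * A)) * (2 ^ S qn * (2 * B)))); [exact Ht|lia|].
    intros m Hm. apply scoef_cancel; lia. }
  apply Req_le. rewrite !pow_add. pose proof (pow2_pos (S i)). field. lra.
Qed.

Lemma component_estimate (i : Z) (t : R) : (-1 <= i)%Z -> 0 <= t <= 1 ->
  Rabs (SDelta F i t) <= 8 * rate i p (Z.of_nat qn) * A * B.
Proof.
  intros Hi Ht. destruct (Z.ltb_spec i 0) as [Hneg|Hnn].
  - unfold SDelta. rewrite (proj2 (Z.ltb_lt i 0) Hneg), F_zero, Rabs_R0.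
    pose proof (rate_pos i p (Z.of_nat qn)). apply Rmult_le_pos; [nra|exact HB0].
  - destruct (Z_of_nat_complete i Hnn) as [ni ->].
    rewrite SDelta_nonneg, Nat2Z.id by lia.
    destruct (Z_le_gt_dec (Z.of_nat qn) p).
    + destruct (Z_le_gt_dec (Z.of_nat ni) p).
      * apply estimate_p_dominant; auto.
      * apply estimate_i_dominant; auto; lia.
    + destruct (lt_eq_lt_dec ni qn) as [[Hlt|Heq]|Hgt].
      * apply estimate_q_dominant; auto; lia.
      * apply estimate_exceptional; auto; lia.
      * apply estimate_i_dominant; auto; lia.
Qed.

End Estimates.

Theorem mainTheorem5 :
  forall (d n : nat),
  exists C : R,
  forall (i p q : Z) (v : R -> nat -> nat -> R) (w : R -> nat -> R)
         (F : R -> nat -> R) (A B : R),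
    (-1 <= i)%Z -> (-1 <= p)%Z -> (0 <= q)%Z ->
    (forall k j, (k < n)%nat -> (j < d)%nat -> cont01 (fun s => v s k j)) ->
    (forall j, (j < d)%nat -> cont01 (fun s => w s j)) ->
    (forall t k, 0 <= t <= 1 -> (k < n)%nat ->
       exists pr : Riemann_integrable
         (fun s => fsum d (fun j =>
            SDelta (fun r => v r k j) p s * dSDelta (fun r => w r j) (Z.to_nat q) s))
         0 t,
       F t k = RiemannInt pr) ->
    (forall s, 0 <= s <= 1 ->
       opnorm n d (fun k j => SDelta (fun r => v r k j) p s) <= A) ->
    (forall s, 0 <= s <= 1 ->
       vnorm d (fun j => SDelta (fun r => w r j) q s) <= B) ->
    forall t, 0 <= t <= 1 ->
      vnorm n (fun k => SDelta (fun r => F r k) i t) <=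
        C * (if ((i =? q)%Z && (p <? q)%Z)%bool then 1
             else powerRZ 2 (- Z.max i (Z.max p q) - i + p + q)) * A * B.
Proof.
  intros d n. exists 8.
  intros i p q v w F A B Hi Hp Hq _ _ HF HA HB t Ht.
  destruct (Z_of_nat_complete q Hq) as [qn ->]. rewrite Nat2Z.id in HF.
  fold (rate i p (Z.of_nat qn)).
  assert (HA0 : 0 <= A) by (eapply Rle_trans; [apply fold_max_nonneg|apply (HA 0); lra]).
  assert (HB0 : 0 <= B) by (eapply Rle_trans; [apply fold_max_nonneg|apply (HB 0); lra]).
  apply vnorm_le.
  { pose proof (rate_pos i p (Z.of_nat qn)). apply Rmult_le_pos; [nra|exact HB0]. }
  intros k Hk.
  apply (component_estimate d p qn (fun j r => v r k j) (fun j r => w r j) (fun r => F r k));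
    auto.
  - intros s Hs. exact (HF s k Hs Hk).
  - intros s Hs. eapply Rle_trans; [|apply (HA s Hs)].
    apply (opnorm_row n d (fun k j => SDelta (fun r => v r k j) p s) k Hk).
  - intros s Hs j Hj. eapply Rle_trans; [|apply (HB s Hs)].
    replace (DeltaN (fun r => w r j) qn s) with (SDelta (fun r => w r j) (Z.of_nat qn) s)
      by (rewrite SDelta_nonneg, Nat2Z.id by lia; reflexivity).
    apply (vnorm_comp d (fun j => SDelta (fun r => w r j) (Z.of_nat qn) s) j Hj).
Qed.
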